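(* Let $(G,o)$ be a strong orientation of a cubic graph $G$. Let $e_1=u_1v_1$, $e_2=u_2v_2$ and $f=w_2w_1$ be pairwise non-adjacent edges of $G$ oriented $u_1\to v_1$, $u_2\to v_2$ and $w_2\to w_1$ in $(G,o)$, all three deletable in $(G,o)$. Let $G'$ be obtained from $G$ by subdividing $e_1$ with a new vertex $x_1$, subdividing $e_2$ with a new vertex $x_2$, subdividing $w_1w_2$ with new vertices $y_1,y_2$ so that it becomes the path $w_1y_1y_2w_2$, and adding the edges $x_1y_1$ and $x_2y_2$. Let $(G',o')$ be an orientation of $G'$ containing $u_1\to x_1$, $x_1\to v_1$, $y_1\to w_1$, $y_2\to y_1$, $w_2\to y_2$, $u_2\to x_2$, $x_2\to v_2$, with $o'(e)=o(e)$ for all other edges of $G'$ except $x_1y_1$ and $x_2y_2$. Then: (a) if $(G',o')$ contains $y_1\to x_1$ and $x_2\to y_2$, then $(G',o')$ is strong and $D(G',o')\supseteq (D(G,o)\setminus\{e_1,e_2,f\})\cup\{u_1x_1,x_1y_1,y_1w_1,y_2w_2,x_2y_2,x_2v_2\}$; (b) if $(G',o')$ contains $x_1\to y_1$ and $y_2\to x_2$, then $(G',o')$ is strong and $D(G',o')\supseteq (D(G,o)\setminus\{e_1,e_2,f\})\cup\{x_1v_1,y_1y_2,u_2x_2\}$.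
   Context: An orientation is strong if for every ordered pair of distinct vertices $u,v$ there is a directed $uv$-path. An edge $e$ is deletable in an orientation $(G,o)$ if the restriction of $o$ to $E(G)\setminus\{e\}$ is a strong orientation of $G-e$. $D(G,o)$ denotes the set of edges deletable in $(G,o)$. *)

(* Oriented (multi)graphs: a finite vertex type V, a finite
   edge type E, and tail/head maps; an edge e is oriented tl e -> hd e. *)
From mathcomp Require Import all_boot.
Set Implicit Arguments. Unset Strict Implicit. Unset Printing Implicit Defensive.

Section Orient.
Variables (V E : finType) (tl hd : E -> V).

Definition arcs (P : pred E) : rel V :=
  fun a b => [exists e, [&& P e, tl e == a & hd e == b]].

Definition strong : Prop := forall u v : V, connect (arcs predT) u v.

Definition deletable (e : E) : Prop :=
  forall u v : V, connect (arcs (predC1 e)) u v.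

(* every vertex has degree 3 (a loop would count twice) *)
Definition cubic : Prop :=
  forall v : V, #|[pred e | tl e == v]| + #|[pred e | hd e == v]| = 3.

Definition nonadjacent (e e' : E) : bool :=
  [&& e != e', tl e != tl e', tl e != hd e', hd e != tl e' & hd e != hd e'].
End Orient.

Section Construction.
Variables (V E : finType) (tl hd : E -> V) (e1 e2 f : E).

Definition oldE := {e : E | e \notin [:: e1; e2; f]}.
(* new vertices: 0 = x1, 1 = x2, 2 = y1, 3 = y2 *)
Definition V' := (V + 'I_4)%type.
Definition E' := (oldE + 'I_9)%type.

Definition vx1 : V' := inr (@Ordinal 4 0 isT).
Definition vx2 : V' := inr (@Ordinal 4 1 isT).
Definition vy1 : V' := inr (@Ordinal 4 2 isT).
Definition vy2 : V' := inr (@Ordinal 4 3 isT).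

(* u1 = tl e1, v1 = hd e1, u2 = tl e2, v2 = hd e2, w2 = tl f, w1 = hd f.
   New edges (tail -> head), indexed 0..8:
     0: u1 -> x1     1: x1 -> v1     2: y1 -> w1     3: y2 -> y1
     4: w2 -> y2     5: u2 -> x2     6: x2 -> v2
     7: edge x1y1 : y1 -> x1 if caseA, x1 -> y1 otherwise
     8: edge x2y2 : x2 -> y2 if caseA, y2 -> x2 otherwise *)
Definition newTail (caseA : bool) (i : 'I_9) : V' :=
  nth vx1 [:: inl (tl e1); vx1; vy1; vy2; inl (tl f); inl (tl e2); vx2;
              (if caseA then vy1 else vx1); (if caseA then vx2 else vy2)] i.
Definition newHead (caseA : bool) (i : 'I_9) : V' :=
  nth vx1 [:: vx1; inl (hd e1); inl (hd f); vy1; vy2; vx2; inl (hd e2);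
              (if caseA then vx1 else vy1); (if caseA then vy2 else vx2)] i.

Definition tl' (caseA : bool) (e : E') : V' :=
  match e with inl e0 => inl (tl (val e0)) | inr i => newTail caseA i end.
Definition hd' (caseA : bool) (e : E') : V' :=
  match e with inl e0 => inl (hd (val e0)) | inr i => newHead caseA i end.

Definition newE (i : nat) (H : i < 9) : E' := inr (Ordinal H).
End Construction.
Arguments oldE {E} e1 e2 f.
Arguments tl' {V E} tl e1 e2 f caseA e.
Arguments hd' {V E} hd e1 e2 f caseA e.

From mathcomp Require Import all_boot.
Set Implicit Arguments. Unset Strict Implicit. Unset Printing Implicit Defensive.

(* Every arc of G other than e1, e2, f is an arc of G', and e1, e2, f are
   replaced by the directed paths u1 x1 v1, u2 x2 v2 and w2 y2 y1 w1; hence a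
   directed walk of G avoiding some edge lifts to a directed walk of G'
   avoiding the corresponding edge.  Strong connectivity of G' minus an edge
   therefore reduces to that of G minus an edge (strong because that edge is
   deletable, or G itself), together with directed paths from and to old
   vertices through each of the four new vertices.  The latter is a finite
   search in the ten-vertex gadget: when an edge of a subdivision path is
   deleted, the new vertices cut off from one end of it are rescued by the
   edges x1y1 and x2y2. *)

Lemma connect_homo (T T' : finType) (r : rel T) (r' : rel T') (h : T -> T') :
  (forall x y, r x y -> connect r' (h x) (h y)) ->
  forall x y, connect r x y -> connect r' (h x) (h y).
Proof.
move=> hr x y /connectP[p]; elim: p x => [|z p IHp] x /=; first by move=> _ ->.
by case/andP=> /hr rxz /IHp pzy /pzy; apply: connect_trans.
Qed.

Lemma connect_through (T T' : finType) (r : rel T') (h : T -> T') :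
  (forall a c, connect r (h a) (h c)) ->
  (forall z, exists a, connect r (h a) z) ->
  (forall z, exists a, connect r z (h a)) ->
  forall x y, connect r x y.
Proof.
move=> hh hin hout x y; have [a xa] := hout x; have [c cy] := hin y.
exact: connect_trans xa (connect_trans (hh a c) cy).
Qed.

Lemma connect_arc (V E : finType) (tl hd : E -> V) (P : pred E) e :
  P e -> connect (arcs tl hd P) (tl e) (hd e).
Proof. by move=> Pe; apply/connect1/existsP; exists e; rewrite Pe !eqxx. Qed.

Lemma mem_new_vertices (V : finType) (z : 'I_4) :
  inr z \in [:: vx1 V; vx2 V; vy1 V; vy2 V].
Proof. by case: z => [[|[|[|[|]]]] ?]. Qed.

Section Subdivision.
Variables (V E : finType) (tl hd : E -> V) (e1 e2 f : E).

Lemma subdivision_connect b (P : pred E) (Q : pred (E' e1 e2 f)) :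
  let r := arcs (tl' tl e1 e2 f b) (hd' hd e1 e2 f b) Q in
  (forall u v, connect (arcs tl hd P) u v) ->
  (forall e : oldE e1 e2 f, P (val e) -> Q (inl e)) ->
  (forall g, g \in [:: e1; e2; f] -> P g -> connect r (inl (tl g)) (inl (hd g))) ->
  (forall z, z \in [:: vx1 V; vx2 V; vy1 V; vy2 V] ->
     (exists a, connect r (inl a) z) /\ (exists a, connect r z (inl a))) ->
  forall x y, connect r x y.
Proof.
move=> r strongP old_arcs subdivided new_paths.
apply: (connect_through (h := inl)) => [a c||].
- apply: connect_homo (strongP a c) => {a c}_ _ /existsP[e /and3P[Pe /eqP<- /eqP<-]].
  have [/subdivided/(_ Pe)//|old_e] := boolP (e \in [:: e1; e2; f]).
  exact: (connect_arc _ _ (old_arcs (exist _ e old_e) Pe)).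
- case=> [a|z]; first by exists a.
  by have [[a ?] _] := new_paths _ (mem_new_vertices V z); exists a.
- case=> [a|z]; first by exists a.
  by have [_ [a ?]] := new_paths _ (mem_new_vertices V z); exists a.
Qed.

Ltac arc i :=
  apply/connect1/existsP; exists (inr (@Ordinal 9 i isT));
  apply/and3P; split; [done | apply/eqP; reflexivity | apply/eqP; reflexivity].

Ltac walk n :=
  first [ apply: connect0
        | lazymatch n with S ?m =>
          lazymatch goal with |- is_true (connect (arcs _ ?hd _) ?x ?z) =>
          let step i := apply: (@connect_trans _ _ (hd (inr (@Ordinal 9 i isT))) x z);
                        [arc i | walk m] in
          first [step 0 | step 1 | step 2 | step 3 | step 4
                | step 5 | step 6 | step 7 | step 8] end end ].

(* Searching backwards lets the start of the path be an existential variable. *)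
Ltac walk_back n :=
  first [ apply: connect0
        | lazymatch n with S ?m =>
          lazymatch goal with |- is_true (connect (arcs ?tl _ _) ?x ?z) =>
          let step i := apply: (@connect_trans _ _ (tl (inr (@Ordinal 9 i isT))) x z);
                        [walk_back m | arc i] in
          first [step 0 | step 1 | step 2 | step 3 | step 4
                | step 5 | step 6 | step 7 | step 8] end end ].

Ltac subdivide strongP :=
  apply: (subdivision_connect strongP);
  [ move=> ?; by [| apply: contra => /eqP[->]]
  | move=> g; rewrite !inE => /or3P[]/eqP->;
    first [move=> _; walk 3 | by rewrite /= eqxx]
  | move=> z; rewrite !inE => /or4P[]/eqP->;
    (split; eexists; [walk_back 3 | walk 3]) ].

Lemma strong_subdivision b :
  strong tl hd -> strong (tl' tl e1 e2 f b) (hd' hd e1 e2 f b).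
Proof. by move=> sG; subdivide sG. Qed.

Lemma deletable_subdivision_old b (e : oldE e1 e2 f) :
  deletable tl hd (val e) -> deletable (tl' tl e1 e2 f b) (hd' hd e1 e2 f b) (inl e).
Proof. by move=> de; subdivide de. Qed.

Hypotheses (sG : strong tl hd) (d1 : deletable tl hd e1)
           (d2 : deletable tl hd e2) (df : deletable tl hd f).

Lemma deletable_subdivision_caseA (i : 'I_9) : val i \in [:: 0; 7; 2; 4; 8; 6] ->
  deletable (tl' tl e1 e2 f true) (hd' hd e1 e2 f true) (inr i).
Proof.
case: i => -[|[|[|[|[|[|[|[|[|//]]]]]]]]] i9 //= _.
- by subdivide d1.
- by subdivide df.
- by subdivide df.
- by subdivide d2.
- by subdivide sG.
- by subdivide sG.
Qed.

Lemma deletable_subdivision_caseB (i : 'I_9) : val i \in [:: 1; 3; 5] ->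
  deletable (tl' tl e1 e2 f false) (hd' hd e1 e2 f false) (inr i).
Proof.
case: i => -[|[|[|[|[|[|[|[|[|//]]]]]]]]] i9 //= _.
- by subdivide d1.
- by subdivide df.
- by subdivide d2.
Qed.

End Subdivision.

Theorem mainTheorem10 (V E : finType) (tl hd : E -> V) (e1 e2 f : E) :
  cubic tl hd ->
  strong tl hd ->
  nonadjacent tl hd e1 e2 -> nonadjacent tl hd e1 f -> nonadjacent tl hd e2 f ->
  deletable tl hd e1 -> deletable tl hd e2 -> deletable tl hd f ->
  (* (a): y1 -> x1 and x2 -> y2 *)
  (strong (tl' tl e1 e2 f true) (hd' hd e1 e2 f true)
   /\ (forall e : oldE e1 e2 f, deletable tl hd (val e) ->
         deletable (tl' tl e1 e2 f true) (hd' hd e1 e2 f true) (inl e))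
   /\ (forall i : 'I_9, val i \in [:: 0; 7; 2; 4; 8; 6] ->
         deletable (tl' tl e1 e2 f true) (hd' hd e1 e2 f true) (inr i)))
  /\
  (* (b): x1 -> y1 and y2 -> x2 *)
  (strong (tl' tl e1 e2 f false) (hd' hd e1 e2 f false)
   /\ (forall e : oldE e1 e2 f, deletable tl hd (val e) ->
         deletable (tl' tl e1 e2 f false) (hd' hd e1 e2 f false) (inl e))
   /\ (forall i : 'I_9, val i \in [:: 1; 3; 5] ->
         deletable (tl' tl e1 e2 f false) (hd' hd e1 e2 f false) (inr i))).
Proof.
move=> _ sG _ _ _ d1 d2 df.
do !split.
- exact: strong_subdivision.
- by move=> e; apply: deletable_subdivision_old.
- exact: deletable_subdivision_caseA.
- exact: strong_subdivision.
- by move=> e; apply: deletable_subdivision_old.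
- exact: deletable_subdivision_caseB.
Qed.
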